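(* Let $M=\{u=F(z_1,z_2,\bar z_1,\bar z_2)\}\subset\mathbb{C}^3$ be a rigid real-analytic hypersurface with $F_{z_1\bar z_1}$ nowhere zero, $F_{z_1\bar z_1}F_{z_2\bar z_2}-F_{z_2\bar z_1}F_{z_1\bar z_2}\equiv0$, and $\overline{\mathcal{L}}_1(k)$ nowhere zero, with the notation below. Define $$I_0:=-\frac13\frac{\mathcal{K}(\overline{\mathcal{L}}_1(\overline{\mathcal{L}}_1(k)))}{\overline{\mathcal{L}}_1(k)^2}+\frac13\frac{\mathcal{K}(\overline{\mathcal{L}}_1(k))\,\overline{\mathcal{L}}_1(\overline{\mathcal{L}}_1(k))}{\overline{\mathcal{L}}_1(k)^3}+\frac23\frac{\mathcal{L}_1(\mathcal{L}_1(\bar k))}{\mathcal{L}_1(\bar k)}+\frac23\frac{\mathcal{L}_1(\overline{\mathcal{L}}_1(k))}{\overline{\mathcal{L}}_1(k)},$$ $$V_0:=-\frac13\frac{\overline{\mathcal{L}}_1(\overline{\mathcal{L}}_1(\overline{\mathcal{L}}_1(k)))}{\overline{\mathcal{L}}_1(k)}+\frac59\Big(\frac{\overline{\mathcal{L}}_1(\overline{\mathcal{L}}_1(k))}{\overline{\mathcal{L}}_1(k)}\Big)^2-\frac19\frac{\overline{\mathcal{L}}_1(\overline{\mathcal{L}}_1(k))\,\bar P}{\overline{\mathcal{L}}_1(k)}+\frac13\overline{\mathcal{L}}_1(\bar P)-\frac19\bar P\bar P,$$ $$B:=\frac13\Big(\frac{\overline{\mathcal{L}}_1(\overline{\mathcal{L}}_1(k))}{\overline{\mathcal{L}}_1(k)}-\bar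 P\Big),\qquad \mathcal{Q}_0:=\frac12\overline{\mathcal{L}}_1(I_0)+\frac12 B\,I_0+\bar B\,\bar I_0-\frac12\frac{\mathcal{K}(V_0)}{\overline{\mathcal{L}}_1(k)} .$$ Then $$\mathcal{Q}_0=B\,I_0+\bar B\,\bar I_0-B\bar B+\frac23\operatorname{Re}\Big\{\mathcal{L}_1\Big[\frac{\overline{\mathcal{L}}_1(\overline{\mathcal{L}}_1(k))}{\overline{\mathcal{L}}_1(k)}\Big]\Big\}+\frac13\operatorname{Re}\big(\overline{\mathcal{L}}_1(P)\big).$$
   Context: Coordinates on $\mathbb{C}^3$ are $(z_1,z_2,w)$, $w=u+iv$; $M$ is parametrized by $(z_1,z_2,\bar z_1,\bar z_2,v)$. The vector fields are $\mathcal{L}_1:=\partial_{z_1}-iF_{z_1}\partial_v$, $\mathcal{L}_2:=\partial_{z_2}-iF_{z_2}\partial_v$, and $\overline{\mathcal{L}}_1:=\partial_{\bar z_1}+iF_{\bar z_1}\partial_v$ (complex conjugate); on functions independent of $v$ (as all functions below are) they act as $\partial_{z_1},\partial_{z_2},\partial_{\bar z_1}$ respectively. The slant function is $k:=-F_{z_2\bar z_1}/F_{z_1\bar z_1}$, $\mathcal{K}:=k\,\mathcal{L}_1+\mathcal{L}_2$, and $P:=F_{z_1z_1\bar z_1}/F_{z_1\bar z_1}$. A bar over a function denotes complex conjugation (so $\bar k,\bar P,\bar I_0,\bar B$ are the conjugates of $k,P,I_0,B$). *)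

From Stdlib Require Import Reals List.
From Coquelicot Require Import Coquelicot.
Open Scope R_scope.

Definition pt := (C * C)%type.

(* Real-direction shift: direction 0 = x1, 1 = y1, 2 = x2, 3 = y2. *)
Definition shift (j : nat) (p : pt) (t : R) : pt :=
  match j with
  | 0%nat => ((fst p + RtoC t)%C, snd p)
  | 1%nat => ((fst p + RtoC t * Ci)%C, snd p)
  | 2%nat => (fst p, (snd p + RtoC t)%C)
  | _ => (fst p, (snd p + RtoC t * Ci)%C)
  end.

Definition pd (j : nat) (g : pt -> C) (p : pt) : C :=
  (RtoC (Derive (fun t => Re (g (shift j p t))) 0)
   + Ci * RtoC (Derive (fun t => Im (g (shift j p t))) 0))%C.

Fixpoint iter_pd (ds : list nat) (g : pt -> C) : pt -> C :=
  match ds with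
  | nil => g
  | j :: ds' => pd j (iter_pd ds' g)
  end.

Definition smooth_on (U : pt -> Prop) (g : pt -> C) : Prop :=
  forall (ds : list nat) (p : pt), U p ->
    continuous (iter_pd ds g) p /\
    forall j : nat,
      ex_derive (fun t => Re (iter_pd ds g (shift j p t))) 0 /\
      ex_derive (fun t => Im (iter_pd ds g (shift j p t))) 0.

Definition Dz1 (g : pt -> C) (p : pt) : C := (/ 2 * (pd 0 g p - Ci * pd 1 g p))%C.
Definition Dzb1 (g : pt -> C) (p : pt) : C := (/ 2 * (pd 0 g p + Ci * pd 1 g p))%C.
Definition Dz2 (g : pt -> C) (p : pt) : C := (/ 2 * (pd 2 g p - Ci * pd 3 g p))%C.
Definition Dzb2 (g : pt -> C) (p : pt) : C := (/ 2 * (pd 2 g p + Ci * pd 3 g p))%C.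

Section Rigid.
Variable F : pt -> R.

Definition Fc (p : pt) : C := RtoC (F p).

(* On functions independent of v, L1, L2, Lbar1 act as d/dz1, d/dz2, d/dzbar1. *)
Definition L1 := Dz1.
Definition L2 := Dz2.
Definition Lb1 := Dzb1.

Definition F_z1zb1 := Dz1 (Dzb1 Fc).
Definition F_z2zb2 := Dz2 (Dzb2 Fc).
Definition F_z2zb1 := Dz2 (Dzb1 Fc).
Definition F_z1zb2 := Dz1 (Dzb2 Fc).
Definition F_z1z1zb1 := Dz1 (Dz1 (Dzb1 Fc)).

Definition kk (p : pt) : C := (- F_z2zb1 p / F_z1zb1 p)%C.
Definition kb (p : pt) : C := Cconj (kk p).
Definition KK (g : pt -> C) (p : pt) : C := (kk p * L1 g p + L2 g p)%C.

Definition PP (p : pt) : C := (F_z1z1zb1 p / F_z1zb1 p)%C.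
Definition Pb (p : pt) : C := Cconj (PP p).

Definition I0 (p : pt) : C :=
  (- / 3 * KK (Lb1 (Lb1 kk)) p / (Lb1 kk p * Lb1 kk p)
   + / 3 * KK (Lb1 kk) p * Lb1 (Lb1 kk) p / (Lb1 kk p * Lb1 kk p * Lb1 kk p)
   + 2 / 3 * L1 (L1 kb) p / L1 kb p
   + 2 / 3 * L1 (Lb1 kk) p / Lb1 kk p)%C.
Definition I0b (p : pt) : C := Cconj (I0 p).

Definition V0 (p : pt) : C :=
  (- / 3 * Lb1 (Lb1 (Lb1 kk)) p / Lb1 kk p
   + 5 / 9 * ((Lb1 (Lb1 kk) p / Lb1 kk p) * (Lb1 (Lb1 kk) p / Lb1 kk p))
   - / 9 * Lb1 (Lb1 kk) p * Pb p / Lb1 kk p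
   + / 3 * Lb1 Pb p
   - / 9 * Pb p * Pb p)%C.

Definition BB (p : pt) : C := (/ 3 * (Lb1 (Lb1 kk) p / Lb1 kk p - Pb p))%C.
Definition Bb (p : pt) : C := Cconj (BB p).

Definition Q0 (p : pt) : C :=
  (/ 2 * Lb1 I0 p + / 2 * BB p * I0 p + Bb p * I0b p
   - / 2 * KK V0 p / Lb1 kk p)%C.

Definition Q0_rhs (p : pt) : C :=
  (BB p * I0 p + Bb p * I0b p - BB p * Bb p
   + 2 / 3 * RtoC (Re (L1 (fun q => Lb1 (Lb1 kk) q / Lb1 kk q) p))
   + / 3 * RtoC (Re (Lb1 PP p)))%C.

End Rigid.

From Stdlib Require Import Reals List Lra Lia.
From Coquelicot Require Import Coquelicot.
Open Scope R_scope.

(* Q0 and the right-hand side are rational expressions in derivatives of the slant function k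
   and of P.  Differentiating I0 and V0 symbolically and reducing every mixed derivative to a
   fixed set of independent quantities turns the claim into an identity of rational functions.
   The reductions are: Wirtinger derivatives commute (Schwarz); [Lb1, K] = Lb1(k) L1;
   A := F_z1zb1 is real, and differentiating k A = -F_z2zb1 along z1 gives K(A) = -A L1(k).
   As Pb = Lb1(A)/A, it follows that K(Pb) = -L1 Lb1 k - Lb1(k) P, that L1(Pb) = Lb1(P)
   (so Lb1(P) is real) and that K(Lb1 Pb) = -L1 Lb1^2 k - Lb1^2(k) P - 2 Lb1(k) Lb1(P). *)

Lemma C_norm2_neq0 (z : C) : z <> 0%C -> fst z ^ 2 + snd z ^ 2 <> 0.
Proof.
  intros hz E. apply hz. destruct z as [x y]; simpl in *.
  assert (x = 0) by nra. assert (y = 0) by nra. subst. reflexivity.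
Qed.

Lemma Cconj_RtoC (r : R) : Cconj (RtoC r) = RtoC r.
Proof. unfold Cconj, RtoC; simpl. f_equal. ring. Qed.

Lemma Cconj_neq0 (z : C) : z <> 0%C -> Cconj z <> 0%C.
Proof.
  intros hz E. apply hz. rewrite <- (Cconj_conj z), E. apply injective_projections; simpl; ring.
Qed.

Lemma RtoC_neq0 (r : R) : r <> 0 -> RtoC r <> 0%C.
Proof. intros hr E. apply hr. now injection E. Qed.

(** * Partial derivatives along the coordinate axes *)

Definition has_pd (j : nat) (g : pt -> C) (q : pt) : Prop :=
  ex_derive (fun t => fst (g (shift j q t))) 0 /\ ex_derive (fun t => snd (g (shift j q t))) 0.

Lemma shift0 j q : shift j q 0 = q.
Proof.
  destruct q as [[a b] [c d]]; destruct j as [|[|[|]]]; unfold shift; simpl;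
  f_equal; apply injective_projections; simpl; ring.
Qed.

Lemma pd_components j g q :
  pd j g q = (Derive (fun t => fst (g (shift j q t))) 0, Derive (fun t => snd (g (shift j q t))) 0).
Proof. unfold pd, Re, Im. apply injective_projections; simpl; ring. Qed.

Lemma pd_ext j f g q : (forall x, f x = g x) -> pd j f q = pd j g q.
Proof.
  intros hfg. rewrite !pd_components. f_equal; apply Derive_ext; intro t; now rewrite hfg.
Qed.

Section RealPartsRules.
Variables u v u' v' : R -> R.
Hypotheses (hu : ex_derive u 0) (hv : ex_derive v 0) (hu' : ex_derive u' 0) (hv' : ex_derive v' 0).

Lemma derive0_add : ex_derive (fun t => u t + u' t) 0 /\
  Derive (fun t => u t + u' t) 0 = Derive (fun t => u t) 0 + Derive (fun t => u' t) 0.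
Proof. split; [auto_derive; auto | apply is_derive_unique; auto_derive; auto; ring]. Qed.

Lemma derive0_opp :
  ex_derive (fun t => - u t) 0 /\ Derive (fun t => - u t) 0 = - Derive (fun t => u t) 0.
Proof. split; [auto_derive; auto | apply is_derive_unique; auto_derive; auto; ring]. Qed.

Lemma derive0_cmul_re : ex_derive (fun t => u t * u' t - v t * v' t) 0 /\
  Derive (fun t => u t * u' t - v t * v' t) 0 =
  Derive (fun t => u t) 0 * u' 0 + u 0 * Derive (fun t => u' t) 0
  - (Derive (fun t => v t) 0 * v' 0 + v 0 * Derive (fun t => v' t) 0).
Proof. split; [auto_derive; auto | apply is_derive_unique; auto_derive; auto; ring]. Qed.

Lemma derive0_cmul_im : ex_derive (fun t => u t * v' t + v t * u' t) 0 /\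
  Derive (fun t => u t * v' t + v t * u' t) 0 =
  Derive (fun t => u t) 0 * v' 0 + u 0 * Derive (fun t => v' t) 0
  + (Derive (fun t => v t) 0 * u' 0 + v 0 * Derive (fun t => u' t) 0).
Proof. split; [auto_derive; auto | apply is_derive_unique; auto_derive; auto; ring]. Qed.

Hypothesis huv : u 0 ^ 2 + v 0 ^ 2 <> 0.

Lemma derive0_cinv_re : ex_derive (fun t => u t / (u t ^ 2 + v t ^ 2)) 0 /\
  Derive (fun t => u t / (u t ^ 2 + v t ^ 2)) 0 =
  (Derive (fun t => u t) 0 * (v 0 ^ 2 - u 0 ^ 2) - 2 * u 0 * v 0 * Derive (fun t => v t) 0)
  / (u 0 ^ 2 + v 0 ^ 2) ^ 2.
Proof.
  split; [auto_derive; auto | apply is_derive_unique; auto_derive; auto; field]; auto;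
  contradict huv; rewrite <- huv; ring.
Qed.

Lemma derive0_cinv_im : ex_derive (fun t => - v t / (u t ^ 2 + v t ^ 2)) 0 /\
  Derive (fun t => - v t / (u t ^ 2 + v t ^ 2)) 0 =
  (Derive (fun t => v t) 0 * (v 0 ^ 2 - u 0 ^ 2) + 2 * u 0 * v 0 * Derive (fun t => u t) 0)
  / (u 0 ^ 2 + v 0 ^ 2) ^ 2.
Proof.
  split; [auto_derive; auto | apply is_derive_unique; auto_derive; auto; field]; auto;
  contradict huv; rewrite <- huv; ring.
Qed.

End RealPartsRules.

Section PartialDerivativeRules.
Variables (f g : pt -> C) (j : nat) (q : pt).

Lemma pd_add : has_pd j f q -> has_pd j g q ->
  has_pd j (fun x => f x + g x)%C q /\ pd j (fun x => f x + g x)%C q = (pd j f q + pd j g q)%C.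
Proof.
  intros [f1 f2] [g1 g2].
  destruct (derive0_add _ _ f1 g1) as [e1 d1], (derive0_add _ _ f2 g2) as [e2 d2].
  unfold has_pd; rewrite !pd_components; simpl. split; [split; assumption |].
  apply injective_projections; simpl; [rewrite d1 | rewrite d2]; ring.
Qed.

Lemma pd_opp : has_pd j f q ->
  has_pd j (fun x => - f x)%C q /\ pd j (fun x => - f x)%C q = (- pd j f q)%C.
Proof.
  intros [f1 f2]. destruct (derive0_opp _ f1) as [e1 d1], (derive0_opp _ f2) as [e2 d2].
  unfold has_pd; rewrite !pd_components; simpl. split; [split; assumption |].
  apply injective_projections; simpl; [rewrite d1 | rewrite d2]; ring.
Qed.

Lemma pd_mul : has_pd j f q -> has_pd j g q ->
  has_pd j (fun x => f x * g x)%C q /\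
  pd j (fun x => f x * g x)%C q = (pd j f q * g q + f q * pd j g q)%C.
Proof.
  intros [f1 f2] [g1 g2].
  destruct (derive0_cmul_re _ _ _ _ f1 f2 g1 g2) as [e1 d1],
           (derive0_cmul_im _ _ _ _ f1 f2 g1 g2) as [e2 d2].
  unfold has_pd; rewrite !pd_components; simpl. rewrite shift0 in d1, d2.
  split; [split; assumption |].
  apply injective_projections; simpl; [rewrite d1 | rewrite d2]; ring.
Qed.

Lemma pd_inv : has_pd j g q -> g q <> 0%C ->
  has_pd j (fun x => / g x)%C q /\ pd j (fun x => / g x)%C q = (- pd j g q / (g q * g q))%C.
Proof.
  intros [g1 g2] hz. assert (hn := C_norm2_neq0 _ hz).
  rewrite <- (shift0 j q) in hn.
  destruct (derive0_cinv_re _ _ g1 g2 hn) as [e1 d1], (derive0_cinv_im _ _ g1 g2 hn) as [e2 d2].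
  unfold has_pd; rewrite !pd_components; simpl. rewrite shift0 in d1, d2, hn.
  split; [split; assumption |].
  destruct (g q) as [x y]; simpl in *.
  apply injective_projections; simpl; [rewrite d1 | rewrite d2]; field;
    split; auto; contradict hn; nra.
Qed.

End PartialDerivativeRules.

Lemma pd_conj f j q : pd j (fun x => Cconj (f x)) q = Cconj (pd j f q).
Proof.
  rewrite !pd_components. unfold Cconj; simpl. f_equal. apply Derive_opp.
Qed.

Lemma has_pd_conj f j q : has_pd j f q -> has_pd j (fun x => Cconj (f x)) q.
Proof. intros [f1 f2]. split; [exact f1 | exact (proj1 (derive0_opp _ f2))]. Qed.

Lemma pd_const (c : C) j q : has_pd j (fun _ => c) q /\ pd j (fun _ => c) q = 0%C.
Proof.
  unfold has_pd; rewrite pd_components.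
  split; [split; apply ex_derive_const | now rewrite !Derive_const].
Qed.

Definition coord (y : pt) (i : nat) : R :=
  match i with 0 => fst (fst y) | 1 => snd (fst y) | 2 => fst (snd y) | _ => snd (snd y) end.

Lemma coord_shift j q t i :
  coord (shift j q t) i = coord q i + (if Nat.eqb (Nat.min j 3) (Nat.min i 3) then t else 0).
Proof.
  destruct q as [[a b] [c d]].
  destruct j as [|[|[|j]]]; destruct i as [|[|[|i]]]; simpl; unfold Cplus, Cmult; simpl; try ring;
  destruct j, i; simpl; ring.
Qed.

Lemma ball_of_coords (q y : pt) (e : posreal) :
  (forall i, (i < 4)%nat -> Rabs (coord y i - coord q i) < e) -> ball q e y.
Proof.
  intros h. destruct q as [[a b] [c d]], y as [[a' b'] [c' d']].
  repeat split; apply (h 0%nat) || apply (h 1%nat) || apply (h 2%nat) || apply (h 3%nat); lia.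
Qed.

Lemma ball_shift2 (q : pt) (e : posreal) i j s t :
  Rabs s < e / 2 -> Rabs t < e / 2 -> ball q e (shift i (shift j q s) t).
Proof.
  intros hs ht. apply ball_of_coords. intros l _. rewrite !coord_shift.
  apply Rabs_def2 in hs; apply Rabs_def2 in ht.
  repeat match goal with |- context [if ?b then _ else _] => destruct b end;
  apply Rabs_def1; lra.
Qed.

Section OpenSet.
Variable U : pt -> Prop.
Hypothesis U_open : open U.

Lemma open_shift2 q : U q ->
  exists e : posreal, forall i j s t, Rabs s < e -> Rabs t < e -> U (shift i (shift j q s) t).
Proof.
  intros hq. destruct (U_open q hq) as [eps H].
  assert (he : 0 < eps / 2) by (destruct eps; simpl; lra).
  exists (mkposreal _ he). intros i j s t hs ht. apply H, ball_shift2; assumption.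
Qed.

Lemma locally_shift q j : U q -> locally 0 (fun t => U (shift j q t)).
Proof.
  intros hq. destruct (open_shift2 q hq) as [e H]. exists e. intros t ht.
  change (Rabs (t - 0) < e) in ht. rewrite Rminus_0_r in ht.
  rewrite <- (shift0 j q). apply H; [rewrite Rabs_R0; apply cond_pos | exact ht].
Qed.

Section Agree.
Variables f g : pt -> C.
Hypothesis fg_agree : forall x, U x -> f x = g x.

Let along_agree q j (p : C -> R) : U q ->
  locally 0 (fun t => p (f (shift j q t)) = p (g (shift j q t))).
Proof.
  intros hq. apply (filter_imp (fun t => U (shift j q t))); [| now apply locally_shift].
  intros t ht. now rewrite fg_agree.
Qed.

Lemma pd_ext_on j q : U q -> pd j f q = pd j g q.
Proof.
  intros hq. rewrite !pd_components. f_equal; apply Derive_ext_loc; now apply along_agree.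
Qed.

Lemma has_pd_ext_on j q : U q -> has_pd j f q -> has_pd j g q.
Proof.
  intros hq [h1 h2].
  split; [apply (ex_derive_ext_loc (fun t => fst (f (shift j q t))))
        | apply (ex_derive_ext_loc (fun t => snd (f (shift j q t))))];
  auto; now apply along_agree.
Qed.

End Agree.
End OpenSet.

(** * Smooth functions on an open set *)

Definition cont_parts (g : pt -> C) (q : pt) : Prop :=
  continuous (fun x => fst (g x)) q /\ continuous (fun x => snd (g x)) q.

Section ContinuityRules.
Variables (f g : pt -> C) (q : pt).
Hypotheses (hf : cont_parts f q) (hg : cont_parts g q).

Let cont_mul (u v : pt -> R) : continuous u q -> continuous v q ->
  continuous (fun x => u x * v x) q.
Proof. intros. now apply (continuous_mult u v). Qed.

Let cont_add (u v : pt -> R) : continuous u q -> continuous v q ->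
  continuous (fun x => u x + v x) q.
Proof. intros. now apply (continuous_plus u v). Qed.

Let cont_opp (u : pt -> R) : continuous u q -> continuous (fun x => - u x) q.
Proof. intros. now apply (continuous_opp u). Qed.

Lemma cont_parts_add : cont_parts (fun x => f x + g x)%C q.
Proof. destruct hf, hg. split; now apply cont_add. Qed.

Lemma cont_parts_opp : cont_parts (fun x => - f x)%C q.
Proof. destruct hf. split; now apply cont_opp. Qed.

Lemma cont_parts_conj : cont_parts (fun x => Cconj (f x)) q.
Proof. destruct hf. split; [assumption | now apply cont_opp]. Qed.

Lemma cont_parts_mul : cont_parts (fun x => f x * g x)%C q.
Proof.
  destruct hf, hg. split; simpl; apply cont_add; try apply cont_opp; now apply cont_mul.
Qed.

Lemma cont_parts_inv : f q <> 0%C -> cont_parts (fun x => / f x)%C q.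
Proof.
  intros hz. destruct hf as [h1 h2].
  assert (hc : continuous (fun x => / (fst (f x) ^ 2 + snd (f x) ^ 2)) q).
  { apply (continuous_comp (fun x => fst (f x) ^ 2 + snd (f x) ^ 2) Rinv).
    - simpl. apply cont_add; apply cont_mul; auto; apply cont_mul; auto; apply continuous_const.
    - apply continuous_Rinv. now apply C_norm2_neq0. }
  split; simpl; unfold Rdiv; apply cont_mul; auto; now apply cont_opp.
Qed.

End ContinuityRules.

Lemma cont_parts_const (c : C) q : cont_parts (fun _ => c) q.
Proof. split; apply continuous_const. Qed.

Lemma cont_parts_of_continuous (g : pt -> C) q : continuous g q -> cont_parts g q.
Proof.
  intros hg. split;
  [apply (continuous_comp g fst) | apply (continuous_comp g snd)]; auto;
  destruct (g q); [apply continuous_fst | apply continuous_snd].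
Qed.

Lemma cont_parts_ext_on (U : pt -> Prop) (f g : pt -> C) q : open U -> U q ->
  (forall x, U x -> f x = g x) -> cont_parts f q -> cont_parts g q.
Proof.
  intros hU hq hfg [h1 h2].
  assert (hloc : forall p : C -> R, locally q (fun x => p (f x) = p (g x))).
  { intro p. apply (filter_imp U); [intros x hx; now rewrite hfg | now apply hU]. }
  split; [apply (continuous_ext_loc _ (fun x => fst (f x)))
        | apply (continuous_ext_loc _ (fun x => snd (f x)))]; auto.
Qed.

Definition regular_at (g : pt -> C) (q : pt) : Prop := (forall j, has_pd j g q) /\ cont_parts g q.

Section RegularRules.
Variables (f g : pt -> C) (q : pt).

Lemma regular_add : regular_at f q -> regular_at g q -> regular_at (fun x => f x + g x)%C q.
Proof. intros [df cf] [dg cg]. split; [intro j; apply pd_add | apply cont_parts_add]; auto. Qed.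

Lemma regular_mul : regular_at f q -> regular_at g q -> regular_at (fun x => f x * g x)%C q.
Proof. intros [df cf] [dg cg]. split; [intro j; apply pd_mul | apply cont_parts_mul]; auto. Qed.

Lemma regular_opp : regular_at f q -> regular_at (fun x => - f x)%C q.
Proof. intros [df cf]. split; [intro j; apply pd_opp | apply cont_parts_opp]; auto. Qed.

Lemma regular_conj : regular_at f q -> regular_at (fun x => Cconj (f x)) q.
Proof. intros [df cf]. split; [intro j; apply has_pd_conj | apply cont_parts_conj]; auto. Qed.

Lemma regular_inv : regular_at f q -> f q <> 0%C -> regular_at (fun x => / f x)%C q.
Proof. intros [df cf] hz. split; [intro j; apply pd_inv | apply cont_parts_inv]; auto. Qed.

End RegularRules.

Lemma regular_const (c : C) q : regular_at (fun _ => c) q.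
Proof. split; [intro j; apply pd_const | apply cont_parts_const]. Qed.

(* Equivalent to [smooth_on], but organised by derivative depth so that closure
   under products and quotients goes by induction on the depth. *)
Fixpoint smooth_upto (U : pt -> Prop) (n : nat) (g : pt -> C) : Prop :=
  (forall q, U q -> regular_at g q) /\
  match n with 0 => True | S m => forall j, smooth_upto U m (pd j g) end.

Definition smooth (U : pt -> Prop) (g : pt -> C) : Prop := forall n, smooth_upto U n g.

Section SmoothClosure.
Variable U : pt -> Prop.
Hypothesis U_open : open U.

Lemma smooth_upto_ext n : forall f g : pt -> C, (forall x, U x -> f x = g x) ->
  smooth_upto U n f -> smooth_upto U n g.
Proof.
  induction n as [|n IH]; intros f g hfg [rf df]; split.
  1, 3: intros q hq; destruct (rf q hq) as [hd hc]; split;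
        [intro j; apply (has_pd_ext_on U U_open f) | apply (cont_parts_ext_on U f)]; auto.
  - exact I.
  - intro j. apply (IH (pd j f)); auto. intros x hx. now apply (pd_ext_on U U_open f g).
Qed.

Lemma smooth_upto_pred n (g : pt -> C) : smooth_upto U (S n) g -> smooth_upto U n g.
Proof.
  revert g; induction n as [|n IH]; intros g [rg dg]; split; auto.
Qed.

Lemma smooth_upto_add n : forall f g : pt -> C, smooth_upto U n f -> smooth_upto U n g ->
  smooth_upto U n (fun x => f x + g x)%C.
Proof.
  induction n as [|n IH]; intros f g [rf df] [rg dg]; split.
  1, 3: intros q hq; apply regular_add; auto.
  - exact I.
  - intro j. apply (smooth_upto_ext n (fun x => pd j f x + pd j g x)%C); auto.
    intros x hx. symmetry. apply pd_add; [apply rf | apply rg]; auto.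
Qed.

Lemma smooth_upto_opp n : forall f : pt -> C,
  smooth_upto U n f -> smooth_upto U n (fun x => - f x)%C.
Proof.
  induction n as [|n IH]; intros f [rf df]; split.
  1, 3: intros q hq; apply regular_opp; auto.
  - exact I.
  - intro j. apply (smooth_upto_ext n (fun x => - pd j f x)%C); auto.
    intros x hx. symmetry. apply pd_opp, rf; auto.
Qed.

Lemma smooth_upto_conj n : forall f : pt -> C,
  smooth_upto U n f -> smooth_upto U n (fun x => Cconj (f x)).
Proof.
  induction n as [|n IH]; intros f [rf df]; split.
  1, 3: intros q hq; apply regular_conj; auto.
  - exact I.
  - intro j. apply (smooth_upto_ext n (fun x => Cconj (pd j f x))); auto.
    intros x hx. symmetry. apply pd_conj.
Qed.

Lemma smooth_upto_const n (c : C) : smooth_upto U n (fun _ => c).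
Proof.
  revert c; induction n as [|n IH]; intro c; split.
  1, 3: intros q hq; apply regular_const.
  - exact I.
  - intro j. apply (smooth_upto_ext n (fun _ => 0%C)); auto.
    intros x hx. symmetry. apply pd_const.
Qed.

Lemma smooth_upto_mul n : forall f g : pt -> C, smooth_upto U n f -> smooth_upto U n g ->
  smooth_upto U n (fun x => f x * g x)%C.
Proof.
  induction n as [|n IH]; intros f g hf hg;
  pose proof hf as [rf df]; pose proof hg as [rg dg]; split.
  1, 3: intros q hq; apply regular_mul; auto.
  - exact I.
  - intro j. apply (smooth_upto_ext n (fun x => pd j f x * g x + f x * pd j g x)%C).
    + intros x hx. symmetry. apply pd_mul; [apply rf | apply rg]; auto.
    + apply smooth_upto_pred in hf, hg. apply smooth_upto_add; auto.
Qed.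

Lemma smooth_upto_inv n : forall g : pt -> C, (forall x, U x -> g x <> 0%C) ->
  smooth_upto U n g -> smooth_upto U n (fun x => / g x)%C.
Proof.
  induction n as [|n IH]; intros g hz hg; pose proof hg as [rg dg]; split.
  1, 3: intros q hq; apply regular_inv; auto.
  - exact I.
  - intro j. apply (smooth_upto_ext n (fun x => - pd j g x * / (g x * g x))%C).
    + intros x hx. symmetry. apply pd_inv; auto. apply rg; auto.
    + apply smooth_upto_pred in hg.
      apply smooth_upto_mul; [apply smooth_upto_opp, dg |].
      apply IH; [intros x hx; apply Cmult_neq_0; auto | apply smooth_upto_mul; auto].
Qed.

Lemma smooth_ext (f g : pt -> C) : (forall x, U x -> f x = g x) -> smooth U f -> smooth U g.
Proof. intros hfg hf n. now apply (smooth_upto_ext n f). Qed.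

Lemma smooth_add (f g : pt -> C) : smooth U f -> smooth U g -> smooth U (fun x => f x + g x)%C.
Proof. intros hf hg n. now apply smooth_upto_add. Qed.

Lemma smooth_mul (f g : pt -> C) : smooth U f -> smooth U g -> smooth U (fun x => f x * g x)%C.
Proof. intros hf hg n. now apply smooth_upto_mul. Qed.

Lemma smooth_opp (f : pt -> C) : smooth U f -> smooth U (fun x => - f x)%C.
Proof. intros hf n. now apply smooth_upto_opp. Qed.

Lemma smooth_conj (f : pt -> C) : smooth U f -> smooth U (fun x => Cconj (f x)).
Proof. intros hf n. now apply smooth_upto_conj. Qed.

Lemma smooth_const (c : C) : smooth U (fun _ => c).
Proof. intro n. apply smooth_upto_const. Qed.

Lemma smooth_inv (g : pt -> C) :
  (forall x, U x -> g x <> 0%C) -> smooth U g -> smooth U (fun x => / g x)%C.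
Proof. intros hz hg n. now apply smooth_upto_inv. Qed.

End SmoothClosure.

Lemma smooth_pd U g j : smooth U g -> smooth U (pd j g).
Proof. intros hg n. exact (proj2 (hg (S n)) j). Qed.

Lemma smooth_regular U g q : smooth U g -> U q -> regular_at g q.
Proof. intros hg hq. exact (proj1 (hg 0%nat) q hq). Qed.

Lemma smooth_of_smooth_on U g : smooth_on U g -> smooth U g.
Proof.
  intros hs n. change g with (iter_pd nil g). generalize (@nil nat) as ds.
  induction n as [|n IH]; intro ds; split; try exact I; try (intro j; exact (IH (j :: ds)));
  intros q hq; destruct (hs ds q hq) as [hc hd]; split; auto; now apply cont_parts_of_continuous.
Qed.

(** * Wirtinger derivatives of rational expressions *)

(* [w] = 0, 1, 2, 3 indexes d/dz1, d/dzbar1, d/dz2, d/dzbar2. *)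
Definition wirt (w : nat) : (pt -> C) -> pt -> C :=
  match w with 0 => Dz1 | 1 => Dzb1 | 2 => Dz2 | _ => Dzb2 end.
Definition wconj (w : nat) : nat := match w with 0 => 1 | 1 => 0 | 2 => 3 | _ => 2 end.
Definition wre (w : nat) : nat := match w with 0 | 1 => 0 | _ => 2 end.
Definition wim (w : nat) : nat := match w with 0 | 1 => 1 | _ => 3 end.
Definition wcoef (w : nat) : C := match w with 0 | 2 => (- (Ci / 2))%C | _ => (Ci / 2)%C end.

Lemma wirt_pd w g q : wirt w g q = (/ 2 * pd (wre w) g q + wcoef w * pd (wim w) g q)%C.
Proof.
  destruct w as [|[|[|w]]]; unfold wirt, Dz1, Dzb1, Dz2, Dzb2, wre, wim, wcoef; simpl;
  field.
Qed.

Lemma wirt_ext w f g q : (forall x, f x = g x) -> wirt w f q = wirt w g q.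
Proof. intros hfg. rewrite !wirt_pd, (pd_ext _ f g), (pd_ext (wim w) f g); auto. Qed.

Lemma wirt_ext_on (U : pt -> Prop) w f g q : open U -> U q ->
  (forall x, U x -> f x = g x) -> wirt w f q = wirt w g q.
Proof.
  intros hU hq hfg.
  rewrite !wirt_pd, (pd_ext_on U hU f g hfg (wre w) q hq).
  now rewrite (pd_ext_on U hU f g hfg (wim w) q hq).
Qed.

Lemma wirt_conj w f q : wirt w (fun x => Cconj (f x)) q = Cconj (wirt (wconj w) f q).
Proof.
  rewrite !wirt_pd, !pd_conj.
  destruct w as [|[|[|w]]]; unfold wconj, wre, wim, wcoef; simpl;
  rewrite ?Cplus_conj, ?Cmult_conj; apply injective_projections; simpl; field.
Qed.

Lemma wirt_const w (c : C) q : wirt w (fun _ => c) q = 0%C.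
Proof. rewrite wirt_pd, !(proj2 (pd_const c _ q)). ring. Qed.

Section WirtingerRules.
Variables (f g : pt -> C) (q : pt) (w : nat).
Hypotheses (hf : regular_at f q) (hg : regular_at g q).

Lemma wirt_add : wirt w (fun x => f x + g x)%C q = (wirt w f q + wirt w g q)%C.
Proof.
  destruct hf as [df _], hg as [dg _].
  rewrite !wirt_pd, !(fun j => proj2 (pd_add f g j q (df j) (dg j))). ring.
Qed.

Lemma wirt_mul : wirt w (fun x => f x * g x)%C q = (wirt w f q * g q + f q * wirt w g q)%C.
Proof.
  destruct hf as [df _], hg as [dg _].
  rewrite !wirt_pd, !(fun j => proj2 (pd_mul f g j q (df j) (dg j))). ring.
Qed.

Lemma wirt_opp : wirt w (fun x => - f x)%C q = (- wirt w f q)%C.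
Proof.
  destruct hf as [df _]. rewrite !wirt_pd, !(fun j => proj2 (pd_opp f j q (df j))). ring.
Qed.

Lemma wirt_inv : f q <> 0%C -> wirt w (fun x => / f x)%C q = (- (wirt w f q * / (f q * f q)))%C.
Proof.
  intros hz. destruct hf as [df _].
  rewrite !wirt_pd, !(fun j => proj2 (pd_inv f j q (df j) hz)).
  unfold Cdiv. ring.
Qed.

End WirtingerRules.

Lemma smooth_wirt U w g : open U -> smooth U g -> smooth U (wirt w g).
Proof.
  intros hU hg.
  apply (smooth_ext U hU (fun x => / 2 * pd (wre w) g x + wcoef w * pd (wim w) g x)%C).
  - intros x _. symmetry. apply wirt_pd.
  - apply smooth_add; auto; apply smooth_mul; auto using smooth_const, smooth_pd.
Qed.

Inductive cexpr : Type :=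
| EFun (f : pt -> C)
| EConst (c : C)
| EAdd (a b : cexpr)
| EMul (a b : cexpr)
| EInv (a : cexpr)
| EOpp (a : cexpr)
| EConj (a : cexpr).

Fixpoint ceval (e : cexpr) : pt -> C :=
  match e with
  | EFun f => f
  | EConst c => fun _ => c
  | EAdd a b => fun x => (ceval a x + ceval b x)%C
  | EMul a b => fun x => (ceval a x * ceval b x)%C
  | EInv a => fun x => (/ ceval a x)%C
  | EOpp a => fun x => (- ceval a x)%C
  | EConj a => fun x => Cconj (ceval a x)
  end.

Fixpoint cderiv (e : cexpr) (w : nat) : cexpr :=
  match e with
  | EFun f => EFun (wirt w f)
  | EConst _ => EConst 0%C
  | EAdd a b => EAdd (cderiv a w) (cderiv b w)
  | EMul a b => EAdd (EMul (cderiv a w) b) (EMul a (cderiv b w))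
  | EInv a => EOpp (EMul (cderiv a w) (EInv (EMul a a)))
  | EOpp a => EOpp (cderiv a w)
  | EConj a => EConj (cderiv a (wconj w))
  end.

Fixpoint smooth_expr (U : pt -> Prop) (e : cexpr) : Prop :=
  match e with
  | EFun f => smooth U f
  | EConst _ => True
  | EAdd a b | EMul a b => smooth_expr U a /\ smooth_expr U b
  | EInv a => smooth_expr U a /\ forall x, U x -> ceval a x <> 0%C
  | EOpp a | EConj a => smooth_expr U a
  end.

Section Expressions.
Variable U : pt -> Prop.
Hypothesis U_open : open U.

Lemma smooth_ceval e : smooth_expr U e -> smooth U (ceval e).
Proof.
  induction e; simpl; intros h; try destruct h.
  all: auto using smooth_const, smooth_add, smooth_mul, smooth_inv, smooth_opp, smooth_conj.
Qed.

Lemma wirt_ceval e q w : smooth_expr U e -> U q -> wirt w (ceval e) q = ceval (cderiv e w) q.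
Proof.
  intros he hq. revert w.
  induction e as [f|c|a IHa b IHb|a IHa b IHb|a IHa|a IHa|a IHa]; intro w; simpl in he |- *.
  - reflexivity.
  - apply wirt_const.
  - destruct he as [ha hb].
    rewrite wirt_add, IHa, IHb; auto; apply (smooth_regular U); auto; now apply smooth_ceval.
  - destruct he as [ha hb].
    rewrite wirt_mul, IHa, IHb; auto; apply (smooth_regular U); auto; now apply smooth_ceval.
  - destruct he as [ha hz].
    rewrite wirt_inv, IHa; auto; apply (smooth_regular U); auto; now apply smooth_ceval.
  - rewrite wirt_opp, IHa; auto; apply (smooth_regular U); auto; now apply smooth_ceval.
  - rewrite wirt_conj, IHa; auto.
Qed.

End Expressions.

Lemma smooth_Dz1 U g : open U -> smooth U g -> smooth U (Dz1 g).
Proof. exact (smooth_wirt U 0 g). Qed.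
Lemma smooth_Dzb1 U g : open U -> smooth U g -> smooth U (Dzb1 g).
Proof. exact (smooth_wirt U 1 g). Qed.
Lemma smooth_Dz2 U g : open U -> smooth U g -> smooth U (Dz2 g).
Proof. exact (smooth_wirt U 2 g). Qed.

Lemma wirt_reify (U : pt -> Prop) w f e q : open U ->
  (forall x, f x = ceval e x) -> smooth_expr U e -> U q -> wirt w f q = ceval (cderiv e w) q.
Proof.
  intros hU hf he hq. rewrite (wirt_ext w f (ceval e)) by assumption. now apply (wirt_ceval U).
Qed.

Ltac reify x t :=
  lazymatch t with
  | context [x] =>
    lazymatch t with
    | Cplus ?u ?v => let eu := reify x u in let ev := reify x v in constr:(EAdd eu ev)
    | Cminus ?u ?v => let eu := reify x u in let ev := reify x v in constr:(EAdd eu (EOpp ev))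
    | Cmult ?u ?v => let eu := reify x u in let ev := reify x v in constr:(EMul eu ev)
    | Cdiv ?u ?v => let eu := reify x u in let ev := reify x v in constr:(EMul eu (EInv ev))
    | Copp ?u => let eu := reify x u in constr:(EOpp eu)
    | Cinv ?u => let eu := reify x u in constr:(EInv eu)
    | Cconj ?u => let eu := reify x u in constr:(EConj eu)
    | ?f x => constr:(EFun f)
    end
  | _ => constr:(EConst t)
  end.

(* Solves [forall x, f x = ceval ?e x], instantiating [?e] by reading off [f]. *)
Ltac reify_eq :=
  let x := fresh "x" in
  intro x; cbv beta;
  lazymatch goal with |- ?l = ceval ?E x => let r := reify x l in unify E r; reflexivity end.

Lemma Dz1_conj g q : Dz1 (fun x => Cconj (g x)) q = Cconj (Dzb1 g q).
Proof. exact (wirt_conj 0 g q). Qed.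

Lemma Dzb1_conj g q : Dzb1 (fun x => Cconj (g x)) q = Cconj (Dz1 g q).
Proof. exact (wirt_conj 1 g q). Qed.

(** * Symmetry of second derivatives *)

Lemma shift_comm i j q s t : shift i (shift j q s) t = shift j (shift i q t) s.
Proof.
  destruct q as [[a b] [c d]].
  destruct i as [|[|[|i]]]; destruct j as [|[|[|j]]];
  unfold shift; simpl; unfold Cplus, Cmult; simpl; f_equal; f_equal; ring.
Qed.

Lemma shift_add i y u t : shift i (shift i y u) t = shift i y (u + t).
Proof.
  destruct y as [[a b] [c d]].
  destruct i as [|[|[|i]]]; unfold shift; simpl; unfold Cplus, Cmult; simpl; f_equal; f_equal; ring.
Qed.

Lemma Derive_translate (phi : R -> R) u : Derive phi u = Derive (fun t => phi (u + t)) 0.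
Proof.
  unfold Derive. f_equal. apply Lim_ext. intro y. now rewrite Rplus_0_l, Rplus_0_r.
Qed.

Lemma ex_derive_translate (phi : R -> R) u :
  ex_derive (fun t => phi (u + t)) 0 -> ex_derive phi u.
Proof.
  intros h.
  apply (ex_derive_ext (fun z => (fun t => phi (u + t)) (z - u))).
  { intro z. simpl. f_equal. ring. }
  apply (ex_derive_comp (fun t => phi (u + t)) (fun z => z - u)).
  - now replace (u - u) with 0 by ring.
  - auto_derive; auto.
Qed.

Definition dd (k : nat) (h : pt -> R) (y : pt) : R := Derive (fun t => h (shift k y t)) 0.

Lemma Derive_along k h y u : Derive (fun t => h (shift k y t)) u = dd k h (shift k y u).
Proof.
  rewrite Derive_translate. unfold dd. apply Derive_ext. intro t. now rewrite shift_add.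
Qed.

Lemma ex_derive_along k (h : pt -> R) y u :
  ex_derive (fun t => h (shift k (shift k y u) t)) 0 -> ex_derive (fun t => h (shift k y t)) u.
Proof.
  intros H. apply ex_derive_translate. eapply ex_derive_ext; [| exact H].
  intro t. simpl. now rewrite shift_add.
Qed.

Lemma continuity_2d_shift (h : pt -> R) q i j : continuous h q ->
  continuity_2d_pt (fun u v => h (shift i (shift j q v) u)) 0 0.
Proof.
  intros hc e. apply filterlim_locally with (eps := e) in hc. destruct hc as [d Hd].
  exists (pos_div_2 d). intros u v hu hv. rewrite Rminus_0_r in hu, hv.
  rewrite !shift0. exact (Hd _ (ball_shift2 q d i j v u hv hu)).
Qed.

(* Coquelicot's [Schwarz] for (z, t) |-> h (shift j (shift i q z) t) at (0, 0). *)
Lemma dd_comm (U : pt -> Prop) (h : pt -> R) q i j : open U -> U q ->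
  (forall y k, U y -> ex_derive (fun t => h (shift k y t)) 0) ->
  (forall y k l, U y -> ex_derive (fun t => dd l h (shift k y t)) 0) ->
  continuous (dd i (dd j h)) q -> continuous (dd j (dd i h)) q ->
  dd i (dd j h) q = dd j (dd i h) q.
Proof.
  intros hU hq hd hdd hc1 hc2.
  set (f := fun z t => h (shift j (shift i q z) t)).
  assert (Lin : forall z v, Derive (fun t => f z t) v = dd j h (shift i (shift j q v) z)).
  { intros z v. unfold f. now rewrite Derive_along, shift_comm. }
  assert (Rin : forall z u, Derive (fun t => f t z) u = dd i h (shift j (shift i q u) z)).
  { intros z u. unfold f.
    rewrite (Derive_ext _ (fun t => h (shift i (shift j q z) t)))
      by (intro; now rewrite shift_comm).
    now rewrite Derive_along, shift_comm. }
  assert (L : forall u v, Derive (fun z => Derive (fun t => f z t) v) u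
                          = dd i (dd j h) (shift i (shift j q v) u)).
  { intros u v. rewrite (Derive_ext _ _ u (fun z => Lin z v)). apply Derive_along. }
  assert (R : forall u v, Derive (fun z => Derive (fun t => f t z) u) v
                          = dd j (dd i h) (shift i (shift j q v) u)).
  { intros u v. rewrite (Derive_ext _ _ v (fun z => Rin z u)), Derive_along.
    now rewrite shift_comm. }
  assert (E := Schwarz f 0 0). rewrite L, R, !shift0 in E. apply E; clear E.
  - destruct (open_shift2 U hU q hq) as [e He]. exists e. intros u v hu hv.
    rewrite Rminus_0_r in hu, hv. assert (hy := He i j v u hv hu).
    repeat split.
    + unfold f. eapply ex_derive_ext; [intro z; now rewrite shift_comm |].
      apply ex_derive_along. auto.
    + apply ex_derive_along. rewrite shift_comm. auto.
    + eapply ex_derive_ext; [intro z; symmetry; apply Lin |]. apply ex_derive_along. auto.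
    + eapply ex_derive_ext; [intro z; symmetry; apply Rin |]. apply ex_derive_along.
      rewrite shift_comm. auto.
  - eapply continuity_2d_pt_ext; [intros u v; symmetry; apply L |]. now apply continuity_2d_shift.
  - eapply continuity_2d_pt_ext; [intros u v; symmetry; apply R |]. now apply continuity_2d_shift.
Qed.

Definition part (b : bool) : C -> R := if b then fst else snd.

Lemma part_pd b j g y : part b (pd j g y) = dd j (fun x => part b (g x)) y.
Proof. rewrite pd_components. now destruct b. Qed.

Lemma part_has_pd b j g y : has_pd j g y -> ex_derive (fun t => part b (g (shift j y t))) 0.
Proof. destruct b; intros [h1 h2]; assumption. Qed.

Lemma part_cont b g y : cont_parts g y -> continuous (fun x => part b (g x)) y.
Proof. destruct b; intros [h1 h2]; assumption. Qed.

Lemma pd_comm (U : pt -> Prop) g q i j : open U -> smooth U g -> U q ->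
  pd i (pd j g) q = pd j (pd i g) q.
Proof.
  intros hU hg hq.
  assert (second : forall b k l y,
             part b (pd k (pd l g) y) = dd k (dd l (fun x => part b (g x))) y).
  { intros b k l y. rewrite part_pd. apply Derive_ext. intro t. apply part_pd. }
  assert (hb : forall b, part b (pd i (pd j g) q) = part b (pd j (pd i g) q)).
  { intro b. rewrite !second. apply (dd_comm U); auto.
    - intros y k hy. apply part_has_pd, (smooth_regular U g); auto.
    - intros y k l hy. eapply ex_derive_ext; [intro t; apply part_pd |].
      apply part_has_pd, (smooth_regular U); auto. now apply smooth_pd.
    - eapply continuous_ext; [intro x; apply second |]. apply part_cont, (smooth_regular U); auto.
      now apply smooth_pd, smooth_pd.
    - eapply continuous_ext; [intro x; apply second |]. apply part_cont, (smooth_regular U); auto.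
      now apply smooth_pd, smooth_pd. }
  apply injective_projections; [apply (hb true) | apply (hb false)].
Qed.

Lemma wirt_comm (U : pt -> Prop) g q w1 w2 : open U -> smooth U g -> U q ->
  wirt w1 (wirt w2 g) q = wirt w2 (wirt w1 g) q.
Proof.
  intros hU hg hq.
  set (lin w := EAdd (EMul (EConst (/ 2)%C) (EFun (pd (wre w) g)))
                     (EMul (EConst (wcoef w)) (EFun (pd (wim w) g)))).
  assert (hlin : forall w, smooth_expr U (lin w)) by (intro; simpl; auto using smooth_pd).
  rewrite (wirt_ext w1 (wirt w2 g) (ceval (lin w2))) by apply wirt_pd.
  rewrite (wirt_ext w2 (wirt w1 g) (ceval (lin w1))) by apply wirt_pd.
  rewrite !(wirt_ceval U hU); auto. simpl. rewrite !wirt_pd.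
  rewrite (pd_comm U g q (wre w1) (wre w2)), (pd_comm U g q (wre w1) (wim w2)),
          (pd_comm U g q (wim w1) (wre w2)), (pd_comm U g q (wim w1) (wim w2)); auto.
  ring.
Qed.

Section WirtingerCommutation.
Variables (U : pt -> Prop) (g : pt -> C) (q : pt).
Hypotheses (U_open : open U) (hg : smooth U g) (hq : U q).

Lemma Dzb1_Dz1 : Dzb1 (Dz1 g) q = Dz1 (Dzb1 g) q.
Proof. exact (wirt_comm U g q 1 0 U_open hg hq). Qed.

Lemma Dzb1_Dz2 : Dzb1 (Dz2 g) q = Dz2 (Dzb1 g) q.
Proof. exact (wirt_comm U g q 1 2 U_open hg hq). Qed.

Lemma Dz1_Dz2 : Dz1 (Dz2 g) q = Dz2 (Dz1 g) q.
Proof. exact (wirt_comm U g q 0 2 U_open hg hq). Qed.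

End WirtingerCommutation.

(** * Rigid hypersurfaces *)

Lemma I0_eq F x :
  I0 F x = (- / 3 * KK F (Dzb1 (Dzb1 (kk F))) x / (Dzb1 (kk F) x * Dzb1 (kk F) x)
            + / 3 * KK F (Dzb1 (kk F)) x * Dzb1 (Dzb1 (kk F)) x
              / (Dzb1 (kk F) x * Dzb1 (kk F) x * Dzb1 (kk F) x)
            + 2 / 3 * Cconj (Dzb1 (Dzb1 (kk F)) x) / Cconj (Dzb1 (kk F) x)
            + 2 / 3 * Dz1 (Dzb1 (kk F)) x / Dzb1 (kk F) x)%C.
Proof.
  assert (L1_kb : forall y, L1 (kb F) y = Cconj (Dzb1 (kk F) y)) by (intro; apply Dz1_conj).
  unfold I0. rewrite L1_kb. change (L1 (L1 (kb F)) x) with (wirt 0 (L1 (kb F)) x).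
  rewrite (wirt_ext 0 (L1 (kb F)) _ x L1_kb), wirt_conj. reflexivity.
Qed.

Section RigidHypersurface.
Variables (U : pt -> Prop) (F : pt -> R).
Hypothesis U_open : open U.
Hypothesis F_smooth : smooth U (Fc F).
Hypothesis A_neq0 : forall x, U x -> F_z1zb1 F x <> 0%C.
Hypothesis a_neq0 : forall x, U x -> Dzb1 (kk F) x <> 0%C.

Local Notation A := (F_z1zb1 F).
Local Notation k := (kk F).
Local Notation K := (KK F).
Local Notation P := (PP F).
Local Notation a := (Dzb1 k).
Local Notation b := (Dzb1 a).
Local Notation c := (Dzb1 b).

Lemma smooth_A : smooth U A.
Proof. apply smooth_Dz1, smooth_Dzb1; auto. Qed.

Lemma smooth_F_z2zb1 : smooth U (F_z2zb1 F).
Proof. apply smooth_Dz2, smooth_Dzb1; auto. Qed.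

Lemma smooth_k : smooth U k.
Proof.
  apply (smooth_ceval U U_open (EMul (EOpp (EFun (F_z2zb1 F))) (EInv (EFun A)))).
  simpl. repeat split; auto using smooth_A, smooth_F_z2zb1.
Qed.

Lemma smooth_P : smooth U P.
Proof.
  apply (smooth_ceval U U_open (EMul (EFun (Dz1 A)) (EInv (EFun A)))).
  simpl. repeat split; auto using smooth_A, smooth_Dz1.
Qed.

Lemma smooth_Pb : smooth U (Pb F).
Proof. apply smooth_conj, smooth_P; auto. Qed.

Lemma smooth_K g : smooth U g -> smooth U (K g).
Proof.
  intros hg. apply (smooth_ceval U U_open (EAdd (EMul (EFun k) (EFun (Dz1 g))) (EFun (Dz2 g)))).
  simpl. repeat split; auto using smooth_k, smooth_Dz1, smooth_Dz2.
Qed.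

Local Hint Resolve smooth_Dz1 smooth_Dzb1 smooth_Dz2 smooth_A smooth_F_z2zb1 smooth_k smooth_P
  smooth_Pb smooth_K A_neq0 a_neq0 : smooth.

Local Ltac nonzero :=
  repeat match goal with
  | |- _ /\ _ => split
  | |- Cmult _ _ <> _ => apply Cmult_neq_0
  | |- Cconj _ <> _ => apply Cconj_neq0
  | |- RtoC _ <> _ => apply RtoC_neq0; discrR
  end; auto with smooth.

Local Ltac solve_smooth :=
  cbn [smooth_expr ceval];
  repeat match goal with
  | |- _ /\ _ => split
  | |- True => exact I
  | |- forall x, U x -> _ => intros ? ?
  end; nonzero.

Local Ltac differentiate :=
  repeat match goal with |- context [wirt ?w ?f ?q] =>
    erewrite (wirt_reify U w f _ q U_open); [| reify_eq | solve_smooth | assumption] end;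
  cbn [ceval cderiv wirt wconj].

Local Ltac push_conj :=
  repeat first [ rewrite Cplus_conj | rewrite Cminus_conj | rewrite Copp_conj | rewrite Cmult_conj
               | rewrite Cconj_conj | rewrite Cconj_RtoC
               | rewrite Cdiv_conj by nonzero | rewrite Cinv_conj by nonzero ].

Lemma K_wirt g p : K g p = (k p * wirt 0 g p + wirt 2 g p)%C.
Proof. reflexivity. Qed.

Lemma Dz2_K g p : Dz2 g p = (K g p - k p * Dz1 g p)%C.
Proof. unfold KK, L1, L2. ring. Qed.

Lemma Dzb1_K g p : smooth U g -> U p -> Dzb1 (K g) p = (a p * Dz1 g p + K (Dzb1 g) p)%C.
Proof.
  intros hg hp. change (Dzb1 (K g) p) with (wirt 1 (fun x => k x * Dz1 g x + Dz2 g x)%C p).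
  differentiate. rewrite (Dzb1_Dz1 U), (Dzb1_Dz2 U) by auto. unfold KK, L1, L2. ring.
Qed.

Lemma A_real p : U p -> Cconj (A p) = A p.
Proof.
  intros hp. unfold F_z1zb1 at 1. rewrite <- Dzb1_conj.
  transitivity (Dzb1 (Dz1 (Fc F)) p); [| now apply (Dzb1_Dz1 U)].
  apply (wirt_ext 1). intro x. rewrite <- Dz1_conj. apply (wirt_ext 0). intro y. apply Cconj_RtoC.
Qed.

Lemma K_A p : U p -> K A p = (- (A p * Dz1 k p))%C.
Proof.
  (* Differentiate k A = - F_z2zb1 along z1. *)
  intros hp.
  assert (E : wirt 0 (fun x => k x * A x)%C p = wirt 0 (fun x => - F_z2zb1 F x)%C p).
  { apply (wirt_ext_on U); auto. intros x hx. unfold kk. field. auto. }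
  revert E. differentiate. intro E.
  unfold F_z2zb1 in E. rewrite (Dz1_Dz2 U) in E by auto with smooth. fold A in E.
  unfold KK, L1, L2.
  replace (k p * Dz1 A p)%C with (Dz1 k p * A p + k p * Dz1 A p - Dz1 k p * A p)%C by ring.
  rewrite E. ring.
Qed.

Lemma Pb_eq p : U p -> Pb F p = (Dzb1 A p / A p)%C.
Proof.
  intros hp. unfold Pb, PP. rewrite Cdiv_conj, A_real by auto. f_equal.
  change (F_z1z1zb1 F p) with (Dz1 A p). rewrite <- Dzb1_conj.
  apply (wirt_ext_on U 1); auto. intros x hx. now apply A_real.
Qed.

Lemma K_Dzb1_A p : U p ->
  K (Dzb1 A) p = (- (Dzb1 A p * Dz1 k p + A p * Dz1 a p + a p * Dz1 A p))%C.
Proof.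
  intros hp.
  transitivity (Dzb1 (K A) p - a p * Dz1 A p)%C; [rewrite Dzb1_K by auto using smooth_A; ring |].
  change (Dzb1 (K A) p) with (wirt 1 (K A) p).
  rewrite (wirt_ext_on U 1 (K A) (fun x => - (A x * Dz1 k x))%C) by auto using K_A.
  differentiate. rewrite (Dzb1_Dz1 U) by auto using smooth_k. ring.
Qed.

Lemma K_Pb p : U p -> K (Pb F) p = (- (Dz1 a p + a p * P p))%C.
Proof.
  intros hp. rewrite K_wirt.
  rewrite !(wirt_ext_on U _ (Pb F) (fun x => Dzb1 A x / A x)%C p) by auto using Pb_eq.
  differentiate. rewrite !Dz2_K, K_Dzb1_A, K_A by auto.
  unfold PP. change (F_z1z1zb1 F p) with (Dz1 A p). field. auto.
Qed.

Lemma Dz1_Pb p : U p -> Dz1 (Pb F) p = Dzb1 P p.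
Proof.
  intros hp. change (wirt 0 (Pb F) p = wirt 1 (fun x => Dz1 A x / A x)%C p).
  rewrite (wirt_ext_on U 0 (Pb F) (fun x => Dzb1 A x / A x)%C) by auto using Pb_eq.
  differentiate. rewrite (Dzb1_Dz1 U) by auto using smooth_A. field. auto.
Qed.

Lemma Dzb1_P_real p : U p -> Cconj (Dzb1 P p) = Dzb1 P p.
Proof. intros hp. rewrite <- Dz1_conj. exact (Dz1_Pb p hp). Qed.

Lemma K_Dzb1_Pb p : U p ->
  K (Dzb1 (Pb F)) p = (- (Dz1 b p + b p * P p + 2 * a p * Dzb1 P p))%C.
Proof.
  intros hp.
  transitivity (Dzb1 (K (Pb F)) p - a p * Dz1 (Pb F) p)%C;
    [rewrite Dzb1_K by auto using smooth_Pb; ring |].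
  change (Dzb1 (K (Pb F)) p) with (wirt 1 (K (Pb F)) p).
  rewrite (wirt_ext_on U 1 (K (Pb F)) (fun x => - (Dz1 a x + a x * P x))%C) by auto using K_Pb.
  differentiate. rewrite (Dzb1_Dz1 U), Dz1_Pb by auto with smooth. ring.
Qed.

Lemma Dzb1_I0 p : U p ->
  Dzb1 (I0 F) p =
  (- K c p / (3 * (a p * a p)) + K b p * b p / (a p * a p * a p)
   + K a p * c p / (3 * (a p * a p * a p)) - K a p * (b p * b p) / (a p * a p * a p * a p)
   + Dz1 b p / (3 * a p) - Dz1 a p * b p / (3 * (a p * a p))
   + 2 * Cconj (Dz1 b p) / (3 * Cconj (a p))
   - 2 * Cconj (b p) * Cconj (Dz1 a p) / (3 * (Cconj (a p) * Cconj (a p))))%C.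
Proof.
  intros hp. change (Dzb1 (I0 F) p) with (wirt 1 (I0 F) p).
  rewrite (wirt_ext 1 (I0 F) _ p (I0_eq F)).
  differentiate. rewrite !Dzb1_K, (Dzb1_Dz1 U a) by auto with smooth.
  field. nonzero.
Qed.

Lemma K_V0 p : U p ->
  K (V0 F) p =
  (- K c p / (3 * a p) + c p * K a p / (3 * (a p * a p))
   + 10 * b p * K b p / (9 * (a p * a p)) - 10 * (b p * b p) * K a p / (9 * (a p * a p * a p))
   - K b p * Pb F p / (9 * a p) + b p * (Dz1 a p + a p * P p) / (9 * a p)
   + b p * Pb F p * K a p / (9 * (a p * a p))
   - (Dz1 b p + b p * P p + 2 * a p * Dzb1 P p) / 3
   + 2 * Pb F p * (Dz1 a p + a p * P p) / 9)%C.
Proof.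
  intros hp. rewrite K_wirt. unfold V0, Lb1.
  differentiate. rewrite !Dz2_K, K_Pb, K_Dzb1_Pb, Dz1_Pb by auto.
  field. nonzero.
Qed.

Lemma Bb_eq p : U p -> Bb F p = (/ 3 * (Cconj (b p) / Cconj (a p) - P p))%C.
Proof. intros hp. unfold Bb, BB, Pb, Lb1. push_conj. reflexivity. Qed.

Lemma Re_L1_ratio p : U p ->
  RtoC (Re (L1 (fun q => Lb1 (Lb1 k) q / Lb1 k q)%C p)) =
  (/ 2 * (Dz1 b p / a p - b p * Dz1 a p / (a p * a p)
          + Cconj (Dz1 b p) / Cconj (a p)
          - Cconj (b p) * Cconj (Dz1 a p) / (Cconj (a p) * Cconj (a p))))%C.
Proof.
  intros hp. rewrite re_alt. unfold L1, Lb1. change (Dz1 ?f p) with (wirt 0 f p).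
  differentiate. push_conj. field. nonzero.
Qed.

Lemma Re_Dzb1_P p : U p -> RtoC (Re (Lb1 P p)) = Dzb1 P p.
Proof. intros hp. rewrite re_alt. unfold Lb1. rewrite Dzb1_P_real by auto. field. Qed.

Lemma Q0_eq_rhs p : U p -> Q0 F p = Q0_rhs F p.
Proof.
  intros hp. unfold Q0, Q0_rhs.
  rewrite Re_L1_ratio, Re_Dzb1_P, Bb_eq, Dzb1_I0, K_V0, (I0_eq F p) by auto.
  unfold BB, Pb, Lb1. field. nonzero.
Qed.

End RigidHypersurface.

Theorem proposition8p1 (U : pt -> Prop) (F : pt -> R) :
  open U ->
  smooth_on U (Fc F) ->
  (forall p, U p -> F_z1zb1 F p <> 0%C) ->
  (forall p, U p ->
     (F_z1zb1 F p * F_z2zb2 F p - F_z2zb1 F p * F_z1zb2 F p)%C = 0%C) ->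
  (forall p, U p -> Lb1 (kk F) p <> 0%C) ->
  forall p, U p -> Q0 F p = Q0_rhs F p.
Proof.
  (* The identity holds without the Levi-degeneracy hypothesis. *)
  intros hU hF hA _ hk.
  exact (Q0_eq_rhs U F hU (smooth_of_smooth_on U _ hF) hA hk).
Qed.
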